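(* For every $u\in W^{1,\gamma}(\Omega)$ there exists a unique $\kappa\in\mathbb{R}$ such that \[ \int_{\Gamma_D}(u+\kappa)_+^{\gamma-1}\,ds=\int_{\Gamma_N}j\,ds. \]
   Context: $\Omega\subset\mathbb{R}^d$ is open, bounded, connected, with $C^1$ boundary $\Gamma=\partial\Omega$; $ds$ denotes the surface measure $d\mathcal{H}^{d-1}$. $\Gamma=\overline{\Gamma_D\cup\Gamma_N}$, where $\Gamma_D,\Gamma_N$ are disjoint, nonempty, relatively open $C^1$ $(d-1)$-dimensional manifolds of positive $\mathcal{H}^{d-1}$-measure with $\mathcal{H}^{d-1}(\partial\Gamma_D\cap\partial\Gamma_N)=0$. The boundary values of $u$ are its trace. Exponents: $\alpha>1$, $\beta>0$, $\gamma=\frac{\beta+1}{\beta}\alpha$, $\gamma'=\gamma/(\gamma-1)$. $j\in L^{\gamma'}(\Gamma_N)$ with $j\ge0$, $j\not\equiv0$. $q_+=\max\{q,0\}$. *)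

From mathcomp Require Import all_boot all_order all_algebra.
From mathcomp Require Import all_classical all_reals all_analysis.
Set Implicit Arguments. Unset Strict Implicit. Unset Printing Implicit Defensive.
Import Order.TTheory GRing.Theory Num.Theory.
Local Open Scope ring_scope.

Definition gam {R : realType} (alpha beta : R) : R := (beta + 1) / beta * alpha.
Definition gamc {R : realType} (alpha beta : R) : R :=
  gam alpha beta / (gam alpha beta - 1).
Definition pos_part {R : realType} (q : R) : R := Num.max q 0.

From mathcomp Require Import all_boot all_order all_algebra.
From mathcomp Require Import all_classical all_reals all_analysis measurable_realfun.
From mathcomp.algebra_tactics Require Import lra.
Import Order.TTheory GRing.Theory Num.Theory.
Import numFieldNormedType.Exports.
Set Implicit Arguments. Unset Strict Implicit. Unset Printing Implicit Defensive.
Local Open Scope classical_set_scope.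
Local Open Scope ring_scope.

(* Put p := gamma - 1 and F k := \int_{Gamma_D} (u + k)_+^p.  As 0 < p < gamma
   and the measure is finite, (u + k)_+^p <= 2^p (|u|^p + |k|^p) is integrable,
   so F is finite, nondecreasing, continuous by dominated convergence, tends to
   0 at -oo, and is unbounded since u is bounded below on a part of Gamma_D of
   positive measure.  The intermediate value theorem gives k with
   F k = \int_{Gamma_N} j > 0.  For uniqueness, F k1 = F k2 with k1 < k2 forces
   the integrands to agree a.e.; as t |-> t_+^p is strictly increasing where it
   is positive, (u + k2)_+ = 0 a.e., i.e. F k2 = 0. *)

Section pos_part_powR.
Variable R : realType.
Implicit Types a b k p q s t : R.

Lemma pos_part_ge0 t : 0 <= pos_part t.
Proof. by rewrite le_max lexx orbT. Qed.

Lemma le_pos_part : {homo @pos_part R : s t / s <= t}.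
Proof. by move=> s t st; rewrite /pos_part ge_max !le_max st lexx !orbT. Qed.

Lemma le_pos_part_powR p : 0 <= p -> {homo (fun t => pos_part t `^ p) : s t / s <= t}.
Proof.
by move=> p0 s t /le_pos_part; apply: ge0_ler_powR; rewrite // nnegrE pos_part_ge0.
Qed.

Lemma pos_part_powR_lt p s t : 0 < p -> s < t -> 0 < pos_part t `^ p ->
  pos_part s `^ p < pos_part t `^ p.
Proof.
move=> p0 st; have [t_le0|t_gt0] := leP t 0.
  by rewrite /pos_part max_r // powR0 ?gt_eqF // ltxx.
have -> : pos_part t = t by rewrite /pos_part max_l // ltW.
move=> _; apply: gt0_ltr_powR; rewrite // ?nnegrE ?pos_part_ge0 ?ltW //.
by rewrite gt_max st.
Qed.

Lemma continuous_pos_part_powR p : 0 < p -> continuous (fun t => pos_part t `^ p).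
Proof.
move=> p0 t; rewrite /continuous_at /pos_part.
have [t_lt0|t_gt0|->] := ltgtP t 0.
- rewrite powR0 ?gt_eqF //.
  apply: cvg_near_cst; near=> s; rewrite max_r ?powR0 ?gt_eqF // ltW //.
  by near: s; exact: lt_nbhsl.
- apply: (@cvg_trans _ ((fun s : R => s `^ p) @ t)).
    apply: near_eq_cvg; near=> s; rewrite max_l // ltW //.
    by near: s; exact: lt_nbhsr.
  apply: (@differentiable_continuous _ _ _ t (fun s : R => s `^ p)).
  apply/derivable1_diffP.
  by apply: derivable_powR; rewrite in_itv /= andbT.
- have -> : (0 : R) `^ p = (fun t => Num.max t 0 `^ p) 0 by rewrite /= maxxx.
  apply/left_right_continuousP; rewrite /= maxxx powR0 ?gt_eqF //; split.
    by apply: cvg_near_cst; near=> s; rewrite max_r ?powR0 ?gt_eqF // ltW.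
  apply: (@cvg_trans _ ((fun s : R => s `^ p) @ 0^'+)); last exact: powR_cvg0.
  by apply: near_eq_cvg; near=> s; rewrite max_l // ltW.
Unshelve. all: by end_near.
Qed.

Lemma powR_le1D a p q : 0 <= a -> 0 < p -> p <= q -> a `^ p <= 1 + a `^ q.
Proof.
move=> a0 p0 pq; have [a_le1|a_gt1] := leP a 1; last first.
  by apply: le_trans (ler_powR (ltW a_gt1) pq) _; rewrite lerDr.
suff ap_le1 : a `^ p <= 1 by rewrite (le_trans ap_le1) // lerDl powR_ge0.
have [->|a_neq0] := eqVneq a 0; first by rewrite powR0 ?gt_eqF.
rewrite -(powRr0 a); apply: ger_powR; last exact: ltW.
by rewrite a_le1 andbT lt0r a_neq0.
Qed.

Lemma powRD_le a b p : 0 <= a -> 0 <= b -> 0 <= p ->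
  (a + b) `^ p <= 2 `^ p * (a `^ p + b `^ p).
Proof.
wlog ab : a b / a <= b.
  move=> H a0 b0 p0; have [ab|ba] := leP a b; first exact: H.
  by rewrite addrC [a `^ p + _]addrC; apply: H => //; exact: ltW.
move=> a0 b0 p0; apply: (@le_trans _ _ ((2 * b) `^ p)).
  by apply: ge0_ler_powR; rewrite ?nnegrE ?addr_ge0 ?mulr_ge0 //; lra.
by rewrite powRM // ler_wpM2l ?powR_ge0 // lerDr powR_ge0.
Qed.

Lemma pos_part_powR_le a k p : 0 <= p ->
  pos_part (a + k) `^ p <= 2 `^ p * (`|a| `^ p + `|k| `^ p).
Proof.
move=> p0; apply: (le_trans _ (powRD_le (normr_ge0 a) (normr_ge0 k) p0)).
apply: ge0_ler_powR; rewrite ?nnegrE ?pos_part_ge0 ?addr_ge0 //.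
by rewrite ge_max addr_ge0 // andbT (le_trans (ler_norm _) (ler_normD _ _)).
Qed.

End pos_part_powR.

Section integral_facts.
Context d (T : measurableType d) (R : realType).
Variables (mu : {measure set T -> \bar R}) (D : set T).
Hypothesis mD : measurable D.

Lemma lty_measure_integrable_cst (r : R) : (mu D < +oo)%E ->
  mu.-integrable D (fun=> r%:E).
Proof.
move=> muD; apply/integrableP; split; first exact: measurable_cst.
by rewrite (integral_cst mu mD `|r|%:E) lte_mul_pinfty.
Qed.

Lemma measurable_abs_powR (f : T -> R) q : measurable_fun D f ->
  measurable_fun D (fun x => `|f x| `^ q).
Proof.
by move=> mf; apply: measurableT_comp (measurable_powR _) _; exact: measurableT_comp.
Qed.

Lemma integrable_abs_powR (f : T -> R) q : measurable_fun D f ->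
  (\int[mu]_(x in D) (`|f x| `^ q)%:E < +oo)%E ->
  mu.-integrable D (fun x => (`|f x| `^ q)%:E).
Proof.
move=> mf fq; apply/integrableP; split.
  exact/measurable_EFinP/measurable_abs_powR.
by under eq_integral do rewrite gee0_abs ?lee_fin ?powR_ge0 //.
Qed.

Lemma integrable_abs_powR_le (f : T -> R) p q : (mu D < +oo)%E ->
  measurable_fun D f -> 0 < p -> p <= q ->
  mu.-integrable D (fun x => (`|f x| `^ q)%:E) ->
  mu.-integrable D (fun x => (`|f x| `^ p)%:E).
Proof.
move=> muD mf p0 pq fq.
apply: (le_integrable mD _ _ (integrableD mD (lty_measure_integrable_cst 1 muD) fq)).
  exact/measurable_EFinP/measurable_abs_powR.
move=> x _; rewrite !gee0_abs ?adde_ge0 ?lee_fin ?powR_ge0 //.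
exact: powR_le1D.
Qed.

Lemma integral_gt0 (f : T -> R) : measurable_fun D f ->
  (forall x, D x -> 0 <= f x) -> ~ {ae mu, forall x, D x -> f x = 0} ->
  (0 < \int[mu]_(x in D) (f x)%:E)%E.
Proof.
move=> mf f_ge0 f_neq0.
rewrite lt0e integral_ge0 ?andbT; last by move=> x /f_ge0; rewrite lee_fin.
apply/negP => /eqP f0; apply: f_neq0.
have : ae_eq mu D (fun x => (f x)%:E) (cst 0%E).
  apply/ae_eq_integral_abs => //; first exact/measurable_EFinP.
  rewrite -[RHS]f0; apply: eq_integral => x /[!inE] /f_ge0 fx.
  by rewrite gee0_abs // lee_fin.
by apply: filterS => x fx /fx [].
Qed.

Lemma measure_gt0_lbound (u : T -> R) : measurable_fun D u -> (0 < mu D)%E ->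
  exists M : nat, (0 < mu (D `&` u @^-1` [set` `[- M%:R, +oo[%R]))%E.
Proof.
move=> mfu muD_gt0; apply: contrapT => /forallNP muA_le0.
have A_negligible M : mu.-negligible (D `&` u @^-1` [set` `[- M%:R, +oo[%R]).
  apply/negligibleP; first by apply: mfu => //; exact: measurable_itv.
  by apply/eqP; rewrite eq_le measure_ge0 andbT leNgt; apply/negP; exact: muA_le0.
have /(negligibleP _ mD) muD0 : mu.-negligible D.
  apply: negligibleS (negligible_bigcup A_negligible) => x Dx.
  exists (Num.bound `|u x|)%N => //; split => //=.
  rewrite in_itv /= andbT lerNl; apply: ltW.
  by apply: le_lt_trans (archi_boundP (normr_ge0 _)); rewrite -normrN ler_norm.
by rewrite muD0 ltxx in muD_gt0.
Qed.

End integral_facts.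

Definition pos_part_pow_integral d (T : measurableType d) (R : realType)
    (mu : {measure set T -> \bar R}) (D : set T) (u : T -> R) (p k : R) :=
  (\int[mu]_(x in D) (pos_part (u x + k) `^ p)%:E)%E.

Section pos_part_pow_integral.
Context d (T : measurableType d) (R : realType).
Variables (mu : {measure set T -> \bar R}) (D : set T) (u : T -> R) (p q : R).
Hypotheses (mD : measurable D) (muD : (mu D < +oo)%E) (mfu : measurable_fun D u).
Hypotheses (p_gt0 : 0 < p) (p_le_q : p <= q).
Hypothesis iuq : mu.-integrable D (fun x => (`|u x| `^ q)%:E).

Local Notation F := (pos_part_pow_integral mu D u p).

Lemma measurable_pos_part_pow k :
  measurable_fun D (fun x => pos_part (u x + k) `^ p).
Proof.
apply: measurableT_comp (measurable_powR _) _.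
apply: measurable_maxr; last exact: measurable_cst.
by apply: measurable_funD => //; exact: measurable_cst.
Qed.

Lemma integrable_pos_part_pow k :
  mu.-integrable D (fun x => (pos_part (u x + k) `^ p)%:E).
Proof.
have iup := integrable_abs_powR_le mD muD mfu p_gt0 p_le_q iuq.
have ik := lty_measure_integrable_cst mD (`|k| `^ p) muD.
apply: (le_integrable mD _ _ (integrableZl mD (2 `^ p) (integrableD mD iup ik))).
  exact/measurable_EFinP/measurable_pos_part_pow.
move=> x _; rewrite !gee0_abs ?mule_ge0 ?adde_ge0 ?lee_fin ?powR_ge0 //.
exact: pos_part_powR_le (ltW p_gt0).
Qed.

Lemma pos_part_pow_integral_fin_num k : F k \is a fin_num.
Proof. exact: integrable_fin_num (integrable_pos_part_pow k). Qed.

Lemma le_pos_part_pow_integral : {homo F : k1 k2 / k1 <= k2 >-> (k1 <= k2)%E}.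
Proof.
move=> k1 k2 k12; apply: ge0_le_integral => //.
- by move=> x _; rewrite lee_fin powR_ge0.
- exact/measurable_EFinP/measurable_pos_part_pow.
- exact/measurable_EFinP/measurable_pos_part_pow.
- by move=> x _; rewrite lee_fin le_pos_part_powR ?lerD2l // ltW.
Qed.

Lemma pos_part_pow_integral_dominated (k_ : R^nat) (K : R) (g : T -> R) :
  measurable_fun D g -> (forall n, k_ n <= K) ->
  (forall x, D x -> pos_part (u x + k_ n) `^ p @[n --> \oo] --> g x) ->
  F (k_ n) @[n --> \oo] --> (\int[mu]_(x in D) (g x)%:E)%E.
Proof.
move=> mg k_K k_g.
have f_f : {ae mu, forall x, D x ->
    (fun n => (pos_part (u x + k_ n) `^ p)%:E) @ \oo --> (g x)%:E}.
  by apply: aeW => x Dx; apply: cvg_EFin; [exact: nearW | exact: k_g].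
have f_K : {ae mu, forall x n, D x ->
    (`|(pos_part (u x + k_ n) `^ p)%:E| <= (pos_part (u x + K) `^ p)%:E)%E}.
  apply: aeW => x n _; rewrite gee0_abs ?lee_fin ?powR_ge0 //.
  by rewrite le_pos_part_powR ?lerD2l // ltW.
have mf_ n : measurable_fun D (fun x => (pos_part (u x + k_ n) `^ p)%:E).
  exact/measurable_EFinP/measurable_pos_part_pow.
have mEg : measurable_fun D (fun x => (g x)%:E) by exact/measurable_EFinP.
by have [_ _] := dominated_convergence mD mf_ mEg f_f (integrable_pos_part_pow K) f_K.
Qed.

Lemma continuous_pos_part_pow_integral : continuous (fun k => fine (F k)).
Proof.
move=> k; apply/(@cvg_nbhsP _ R^o) => k_ k_k.
have [K /= k_K] : exists K, forall n, `|k_ n| <= K.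
  have /ex_bound[|K k_K] := cvg_seq_bounded (cvgP _ k_k).
    exact: (@globally_properfilter _ _ 0%N).
  by exists K => n; exact: k_K.
apply: fine_cvg; rewrite fineK ?pos_part_pow_integral_fin_num //.
apply: (@pos_part_pow_integral_dominated _ K).
- exact: measurable_pos_part_pow.
- by move=> n; apply: le_trans (ler_norm _) (k_K n).
- move=> x _; apply: (@continuous_cvg _ _ _ _ _ _ (fun t => pos_part t `^ p)).
    exact: continuous_pos_part_powR.
  by apply: cvgD => //; exact: cvg_cst.
Qed.

Lemma cvg_pos_part_pow_integralNy : F (- n%:R) @[n --> \oo] --> 0%E.
Proof.
rewrite [X in _ --> X](_ : _ = \int[mu]_(x in D) (0%R : R)%:E)%E; last first.
  by rewrite integral0_eq.
apply: (@pos_part_pow_integral_dominated _ 0 (fun=> 0)).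
- exact: measurable_cst.
- by move=> n; rewrite oppr_le0.
- move=> x _; apply: cvg_near_cst; near=> n.
  rewrite /pos_part max_r ?powR0 ?gt_eqF // subr_le0 ltW //.
  by near: n; exact: nbhs_infty_gtr.
Unshelve. all: by end_near.
Qed.

Lemma pos_part_pow_integral_unbounded : (0 < mu D)%E ->
  forall c : R, exists k, (c%:E <= F k)%E.
Proof.
move=> muD_gt0 c; wlog c_ge0 : c / 0 <= c.
  move=> H; have [|k ck] := H (Num.max c 0); first by rewrite le_max lexx orbT.
  by exists k; apply: le_trans ck; rewrite lee_fin le_max lexx.
have [M muA_gt0] := measure_gt0_lbound mD mfu muD_gt0.
set A := D `&` _ in muA_gt0.
have mA : measurable A by apply: mfu => //; exact: measurable_itv.
have AD : A `<=` D by move=> x [].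
have muA_fin : mu A \is a fin_num.
  rewrite ge0_fin_numE ?measure_ge0 //.
  by rewrite (le_lt_trans (le_measure _ _ _ AD)) ?inE.
pose s := fine (mu A).
have s_gt0 : 0 < s by apply: fine_gt0; rewrite muA_gt0 -ge0_fin_numE ?measure_ge0.
pose t := (c / s) `^ p^-1.
exists (M%:R + t).
(* On [A] the integrand at [M + t] is at least [t ^ p], and [t ^ p * mu A = c]. *)
have -> : c%:E = (\int[mu]_(x in A) (t `^ p)%:E)%E.
  rewrite integral_cst // -[mu A]fineK // -EFinM -/s -powRrM mulVf ?gt_eqF //.
  by rewrite powRr1 ?divfK ?gt_eqF // divr_ge0 // ltW.
apply: (@le_trans _ _
  (\int[mu]_(x in A) (pos_part (u x + (M%:R + t)) `^ p)%:E)%E).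
  apply: ge0_le_integral => //.
  - by move=> x _; rewrite lee_fin powR_ge0.
  - exact/measurable_EFinP/measurable_funS/measurable_pos_part_pow.
  move=> x [_ /=]; rewrite in_itv /= andbT => Mu.
  rewrite lee_fin; apply: ge0_ler_powR;
    rewrite ?nnegrE ?powR_ge0 ?pos_part_ge0 ?(ltW p_gt0) //.
  by rewrite le_max addrA lerDr -lerBlDr sub0r Mu.
apply: ge0_subset_integral => //.
- exact/measurable_EFinP/measurable_pos_part_pow.
- by move=> x _; rewrite lee_fin powR_ge0.
Qed.

Lemma pos_part_pow_integral_eq0 k1 k2 : k1 < k2 -> F k1 = F k2 -> F k2 = 0%E.
Proof.
rewrite /pos_part_pow_integral => k12 F12.
pose h k x := pos_part (u x + k) `^ p.
have h12 x : h k1 x <= h k2 x by rewrite le_pos_part_powR ?lerD2l ?ltW.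
have mh k : measurable_fun D (fun x => (h k x)%:E).
  exact/measurable_EFinP/measurable_pos_part_pow.
have h12_ae : ae_eq mu D (fun x => ((h k2 x)%:E - (h k1 x)%:E)%E) (cst 0%E).
  apply/ae_eq_integral_abs => //; first exact: emeasurable_funB.
  under eq_integral do rewrite gee0_abs ?sube_ge0 ?lee_fin //.
  rewrite integralB ?F12 ?subee //; try exact: integrable_pos_part_pow.
  exact: pos_part_pow_integral_fin_num.
have h2_ae : ae_eq mu D (fun x => (h k2 x)%:E) (cst 0%E).
  apply: filterS h12_ae => x h12x Dx; have := h12x Dx; rewrite /= -EFinB => -[].
  move=> /eqP; rewrite subr_eq0 => /eqP h21; congr EFin.
  have k12x : u x + k1 < u x + k2 by rewrite ltrD2l.
  apply/eqP; rewrite eq_le powR_ge0 andbT leNgt; apply/negP.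
  by move=> /(pos_part_powR_lt p_gt0 k12x); rewrite -/(h k1 x) -/(h k2 x) h21 ltxx.
by rewrite (ae_eq_integral (cst 0%E) _ mD (mh k2) _ h2_ae) ?integral0.
Qed.

Lemma pos_part_pow_integral_exists_unique (c : R) : (0 < mu D)%E -> 0 < c ->
  exists! k, F k = c%:E.
Proof.
move=> muD_gt0 c_gt0; pose f k := fine (F k).
have Ff k : F k = (f k)%:E by rewrite fineK ?pos_part_pow_integral_fin_num.
have [k0 fk0_lt] : exists k0, f k0 < c.
  have /fine_cvg/cvgr_lt/(_ c c_gt0) [N _ fN] := cvg_pos_part_pow_integralNy.
  by exists (- N%:R); apply: (fN N) => /=.
have [k1 fk1_ge] := pos_part_pow_integral_unbounded muD_gt0 c.
rewrite Ff lee_fin in fk1_ge.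
have k01 : k0 <= k1.
  rewrite leNgt; apply/negP => /ltW/le_pos_part_pow_integral; rewrite !Ff lee_fin.
  by move=> /(le_trans fk1_ge); rewrite leNgt fk0_lt.
have f_cont : {within `[k0, k1], continuous f}.
  exact/continuous_subspaceT/continuous_pos_part_pow_integral.
have [|k _ fk] := IVT (v := c) k01 f_cont.
  by rewrite ge_min le_max ltW //= fk1_ge orbT.
exists k; split; first by rewrite Ff fk.
move=> k' Fk'; have Fkk' : F k = F k' by rewrite Ff fk.
have [kk'|k'k|//] := ltgtP k k'.
- move: (pos_part_pow_integral_eq0 kk' Fkk').
  by rewrite Fk' => -[] /eqP; rewrite gt_eqF.
- move: (pos_part_pow_integral_eq0 k'k (esym Fkk')).
  by rewrite Ff fk => -[] /eqP; rewrite gt_eqF.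
Qed.

End pos_part_pow_integral.

Theorem lemma5p5 (R : realType) (d : measure_display) (T : measurableType d)
  (sigma : {measure set T -> \bar R}) (GD GN : set T)
  (alpha beta : R) (j u : T -> R) :
  measurable GD -> measurable GN ->
  GD `&` GN = set0 ->
  sigma (~` (GD `|` GN)) = 0%E ->
  (0 < sigma GD)%E -> (0 < sigma GN)%E ->
  (sigma setT < +oo)%E ->
  1 < alpha -> 0 < beta ->
  (* j in L^{gamma'}(Gamma_N), j >= 0, j not identically 0 *)
  measurable_fun GN j ->
  (\int[sigma]_(x in GN) ((`|j x| `^ gamc alpha beta)%:E) < +oo)%E ->
  (forall x, GN x -> 0 <= j x) ->
  ~ {ae sigma, forall x, GN x -> j x = 0} ->
  (* u : the boundary trace, an element of L^gamma(Gamma) *)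
  measurable_fun setT u ->
  (\int[sigma]_(x in setT) ((`|u x| `^ gam alpha beta)%:E) < +oo)%E ->
  exists! kappa : R,
    (\int[sigma]_(x in GD) ((pos_part (u x + kappa) `^ (gam alpha beta - 1))%:E)
     = \int[sigma]_(x in GN) ((j x)%:E))%E.
Proof.
move=> mGD mGN _ _ sGD_gt0 _ s_fin alpha_gt1 beta_gt0 mfj ij j_ge0 j_nae0 mfu iu.
have gam_gt1 : 1 < gam alpha beta.
  have : 1 < (beta + 1) / beta by rewrite ltr_pdivlMr //; lra.
  rewrite /gam; nra.
have gamc_gt1 : 1 < gamc alpha beta by rewrite /gamc ltr_pdivlMr; lra.
have s_lty A : measurable A -> (sigma A < +oo)%E.
  by move=> mA; apply: le_lt_trans s_fin; rewrite le_measure ?inE.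
have ij1 : sigma.-integrable GN (fun x => (j x)%:E).
  apply: (le_integrable mGN _ _ (integrable_abs_powR_le mGN (s_lty _ mGN) mfj
    ltr01 (ltW gamc_gt1) (integrable_abs_powR mfj ij))).
    exact/measurable_EFinP.
  by move=> x _; rewrite powRr1 // /= lee_fin normr_id.
have [c c_gt0 ->] : exists2 c, 0 < c & (\int[sigma]_(x in GN) (j x)%:E)%E = c%:E.
  have jfin := integrable_fin_num mGN ij1.
  exists (fine (\int[sigma]_(x in GN) (j x)%:E)); last by rewrite fineK.
  by rewrite -lte_fin fineK // integral_gt0.
apply: (pos_part_pow_integral_exists_unique (q := gam alpha beta)) => //.
- exact: s_lty.
- exact: measurable_funTS.
- by rewrite subr_gt0.
- by rewrite gerBl.
- exact: integrableS (integrable_abs_powR mfu iu).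
Qed.
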